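(* Let $G$ be a connected graph with $n\geq 2$ vertices and $m$ edges, and let $S(G)$ be its subdivision. Then $$R^+(S(G))=4R^+(G)+4R^*(G)+(m+n)(m-n+1)+2m(m-n).$$
   Context: All graphs are finite, undirected, without loops or multiple edges. For a connected graph $H$ and vertices $i,j$, the resistance distance $\Omega_{ij}$ is the effective resistance between $i$ and $j$ in the electrical network obtained from $H$ by replacing each edge by a unit resistor. With $d_i$ the degree of vertex $i$ in $H$ and sums over unordered pairs of distinct vertices of $H$: the Kirchhoff index is $R(H)=\sum_{\{i,j\}\subseteq V(H)}\Omega_{ij}$, the additive degree-Kirchhoff index is $R^+(H)=\sum_{\{i,j\}\subseteq V(H)}(d_i+d_j)\Omega_{ij}$, and the multiplicative degree-Kirchhoff index is $R^*(H)=\sum_{\{i,j\}\subseteq V(H)}d_id_j\Omega_{ij}$ (all computed in $H$ itself, with degrees and resistances of $H$). The subdivision $S(G)$ is the graph obtained from $G$ by replacing every edge with a path of length two (i.e., inserting one new vertex of degree 2 on each edge). *)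

From HB Require Import structures.
From mathcomp Require Import all_boot all_order all_algebra.
Set Implicit Arguments. Unset Strict Implicit. Unset Printing Implicit Defensive.
Import Order.TTheory GRing.Theory Num.Theory.
Local Open Scope ring_scope.

(* A simple graph is a relation e on a finite type T (assumed symmetric and
   irreflexive in the theorem).  Vertices are indexed in matrices through
   enum_rank / enum_val. *)
Section Graph.
Variable R : fieldType.
Variable T : finType.
Variable e : rel T.

Definition deg (x : T) : nat := #|[pred y | e x y]|.

Definition lap : 'M[R]_#|T| :=
  \matrix_(i, j) (if i == j then (deg (enum_val i))%:R
                  else if e (enum_val i) (enum_val j) then -1 else 0).

(* Resistance distance between x and y: inject a unit current at x and
   extract it at y; a potential vector v solves Kirchhoff's equations
   v L = e_x - e_y (L symmetric), computed with the partial inverse pinvmx;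
   Omega_xy is the potential difference v_x - v_y. *)
Definition resist (x y : T) : R :=
  let b : 'rV[R]_#|T| :=
    \row_k ((enum_val k == x)%:R - (enum_val k == y)%:R) in
  let v := b *m pinvmx lap in
  v 0 (enum_rank x) - v 0 (enum_rank y).

Definition kirchhoff : R :=
  \sum_(x : T) \sum_(y : T | (enum_rank x < enum_rank y)%N) resist x y.
Definition add_deg_kirchhoff : R :=
  \sum_(x : T) \sum_(y : T | (enum_rank x < enum_rank y)%N)
     ((deg x)%:R + (deg y)%:R) * resist x y.
Definition mul_deg_kirchhoff : R :=
  \sum_(x : T) \sum_(y : T | (enum_rank x < enum_rank y)%N)
     ((deg x)%:R * (deg y)%:R) * resist x y.

(* edges: each unordered edge {x,y} represented once as (x,y) with
   enum_rank x < enum_rank y *)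
Definition sedge (p : T * T) : bool := e p.1 p.2 && (enum_rank p.1 < enum_rank p.2)%N.
Definition edge_t := {p : T * T | sedge p}.

End Graph.
HB.instance Definition _ (T : finType) (e : rel T) :=
  Finite.copy (edge_t e) {p : T * T | sedge e p}.

Section Subdiv.
Variable T : finType.
Variable e : rel T.
(* subdivision S(G): vertices are old vertices plus one new vertex per edge *)
Definition subdiv_v := (T + edge_t e)%type.
Definition subdiv_rel : rel subdiv_v := fun u v =>
  match u, v with
  | inl x, inr f => (x == (val f).1) || (x == (val f).2)
  | inr f, inl x => (x == (val f).1) || (x == (val f).2)
  | _, _ => false
  end.
End Subdiv.
HB.instance Definition _ (T : finType) (e : rel T) :=
  Finite.copy (subdiv_v e) (T + edge_t e)%type.

From mathcomp Require Import all_boot all_order all_algebra.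
From mathcomp Require Import ring lra zify.
Set Implicit Arguments. Unset Strict Implicit. Unset Printing Implicit Defensive.
Import Order.TTheory GRing.Theory Num.Theory.
Local Open Scope ring_scope.

(* Fix a root r of G and let K be the Green function of G grounded at r, i.e.
   L K(x, .) = e_x - e_r with K(x, r) = 0.  Then K is symmetric and
   Omega_xy = K_xx + K_yy - 2 K_xy, so R^+(G) and R^*(G) are degree-weighted
   sums of entries of K.  The Green function of S(G) grounded at r is explicit
   in terms of K, and the degrees of S(G) are those of G at old vertices and 2
   at midpoints.  Summing its entries against these degrees, and using
   sum_(y ~ x) (K_xx - K_xy) = 1 - [x = r], expresses R^+(S(G)) through the
   same four sums of K that appear in R^+(G) and R^*(G), together with n and m. *)

Section Sums.
Variable R : comPzRingType.

Lemma sum_delta (I : finType) (x : I) (F : I -> R) : \sum_y (y == x)%:R * F y = F x.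
Proof.
by rewrite (bigD1 x) //= eqxx mul1r big1 ?addr0 // => y /negbTE ->; rewrite mul0r.
Qed.

Lemma sum_mul_delta (I : finType) (x : I) (F : I -> R) : \sum_y F y * (y == x)%:R = F x.
Proof. by rewrite -[RHS](sum_delta x); apply: eq_bigr => y _; rewrite mulrC. Qed.

Lemma sum_const (I : finType) (c : R) : \sum_(i : I) c = #|I|%:R * c.
Proof. by rewrite sumr_const mulr_natl. Qed.

Lemma sum_delta1 (I : finType) (x : I) : \sum_y ((y == x)%:R : R) = 1.
Proof. by rewrite -[RHS](sum_delta x (fun=> 1)); under [RHS]eq_bigr do rewrite mulr1. Qed.

Lemma exchange_big_cond (I J : finType) (Q : I -> J -> bool) (F : I -> J -> R) :
  \sum_i \sum_(j | Q i j) F i j = \sum_j \sum_(i | Q i j) F i j.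
Proof. by rewrite (exchange_big_dep xpredT). Qed.

Lemma sum_pairs_half (I : finType) (F : I -> I -> R) :
  (forall s t, F s t = F t s) -> (forall s, F s s = 0) ->
  2 * \sum_s \sum_(t | (enum_rank s < enum_rank t)%N) F s t = \sum_s \sum_t F s t.
Proof.
move=> Fsym F0.
have split_lt_gt s : \sum_t F s t =
    \sum_(t | (enum_rank s < enum_rank t)%N) F s t
  + \sum_(t | (enum_rank t < enum_rank s)%N) F s t.
  rewrite (bigID (fun t => (enum_rank s < enum_rank t)%N)) /=; congr (_ + _).
  rewrite big_mkcond [RHS]big_mkcond; apply: eq_bigr => t _ /=.
  case: (ltngtP (enum_rank s) (enum_rank t)) => //= /val_inj/enum_rank_inj ->.
  by rewrite F0.
under [RHS]eq_bigr do rewrite split_lt_gt.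
rewrite big_split /= (exchange_big_cond (fun s t => (enum_rank t < enum_rank s)%N)).
under [X in _ = _ + X]eq_bigr do under eq_bigr do rewrite Fsym.
by rewrite mulr2n mulrDl mul1r.
Qed.

End Sums.

Lemma sum_pairs_dist (R : numFieldType) (I : finType) (W B : I -> I -> R) :
  (forall s t, W s t = W t s) -> (forall s t, B s t = B t s) ->
  \sum_s \sum_(t | (enum_rank s < enum_rank t)%N) W s t * (B s s + B t t - 2 * B s t)
  = \sum_s (\sum_t W s t) * B s s - \sum_s \sum_t W s t * B s t.
Proof.
move=> Wsym Bsym; apply: (@mulfI _ 2); first by rewrite pnatr_eq0.
rewrite sum_pairs_half; last 2 first.
- by move=> s t; rewrite (Wsym s t) (Bsym s t) [B s s + _]addrC.
- by move=> s; ring.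
have swap : \sum_s \sum_t W s t * B t t = \sum_s (\sum_t W s t) * B s s.
  rewrite exchange_big; apply: eq_bigr => s _ /=.
  by rewrite mulr_suml; apply: eq_bigr => t _; rewrite Wsym.
have expand s : \sum_t W s t * (B s s + B t t - 2 * B s t) =
    (\sum_t W s t) * B s s + \sum_t W s t * B t t - 2 * \sum_t W s t * B s t.
  rewrite mulr_suml mulr_sumr -big_split -sumrB /=.
  by apply: eq_bigr => t _; ring.
under eq_bigr do rewrite expand.
by rewrite sumrB big_split /= swap -mulr_sumr; ring.
Qed.

Section Laplacian.
Variables (R : realFieldType) (U : finType) (e : rel U).

Definition laplace (w : U -> R) (x : U) : R := \sum_(y | e x y) (w x - w y).

Definition harmonic_const :=
  forall w : U -> R, (forall x, laplace w x = 0) -> forall x y, w x = w y.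

Lemma natr_deg x : (deg e x)%:R = \sum_(y | e x y) (1 : R).
Proof. by rewrite sumr_const. Qed.

Lemma laplaceE w x : laplace w x = (deg e x)%:R * w x - \sum_(y | e x y) w y.
Proof. by rewrite /laplace sumrB natr_deg mulr_suml; under [in RHS]eq_bigr do rewrite mul1r. Qed.

Lemma laplaceD w w' x :
  laplace (fun y => w y + w' y) x = laplace w x + laplace w' x.
Proof. by rewrite /laplace -big_split /=; apply: eq_bigr => y _; ring. Qed.

Lemma laplaceB w w' x :
  laplace (fun y => w y - w' y) x = laplace w x - laplace w' x.
Proof. by rewrite /laplace -sumrB /=; apply: eq_bigr => y _; ring. Qed.

Lemma laplaceZ c w x : laplace (fun y => c * w y) x = c * laplace w x.
Proof. by rewrite /laplace mulr_sumr; apply: eq_bigr => y _; ring. Qed.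

Lemma laplace_subr w c x : laplace (fun y => w y - c) x = laplace w x.
Proof. by apply: eq_bigr => y _; ring. Qed.

Lemma laplace_delta s x :
  laplace (fun y => (y == s)%:R) x = (x == s)%:R * (deg e x)%:R - (e x s)%:R.
Proof.
rewrite laplaceE mulrC big_mkcond /= (eq_bigr (fun y => (y == s)%:R * (e x y)%:R)).
  by rewrite sum_delta.
by move=> y _; case: (e x y); rewrite ?mulr1 ?mulr0.
Qed.

Definition row_of_fun (w : U -> R) : 'rV[R]_#|U| := \row_k w (enum_val k).

Lemma row_of_funE w x : row_of_fun w 0 (enum_rank x) = w x.
Proof. by rewrite mxE enum_rankK. Qed.

Lemma row_of_fun_entries (r : 'rV[R]_#|U|) : row_of_fun (fun x => r 0 (enum_rank x)) = r.
Proof. by apply/rowP => j; rewrite mxE enum_valK. Qed.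

Hypotheses (esym : symmetric e) (eirr : irreflexive e).

Lemma tr_lap : (lap R e)^T = lap R e.
Proof.
apply/matrixP => i j; rewrite !mxE eq_sym.
by case: eqP => [->|_] //; rewrite esym.
Qed.

Lemma mul_row_of_fun_lap w : row_of_fun w *m lap R e = row_of_fun (laplace w).
Proof.
apply/rowP => j; rewrite [RHS]mxE -[in LHS](enum_valK j); move: (enum_val j) => y.
rewrite mxE (reindex (@enum_rank U)) /=; last first.
  by exists enum_val => i _; rewrite ?enum_rankK ?enum_valK.
rewrite laplaceE (bigD1 y) //= !mxE !enum_rankK eqxx mulrC; congr (_ + _).
rewrite -sumrN [RHS]big_mkcond [LHS]big_mkcond /=; apply: eq_bigr => x _.
rewrite !mxE !enum_rankK (inj_eq enum_rank_inj) esym.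
case: eqP => [->|_] /=; first by rewrite eirr.
by case: (e y x) => /=; rewrite ?mulrN1 ?mulr0 ?oppr0.
Qed.

Lemma laplace_adj (u w : U -> R) :
  \sum_x u x * laplace w x = \sum_x laplace u x * w x.
Proof.
rewrite (eq_bigr (fun x => \sum_(y | e x y) (u x * w x - u x * w y))); last first.
  by move=> x _; rewrite mulr_sumr; apply: eq_bigr => y _; ring.
rewrite [RHS](eq_bigr (fun x => \sum_(y | e x y) (u x * w x - u y * w x))); last first.
  by move=> x _; rewrite mulr_suml; apply: eq_bigr => y _; ring.
under eq_bigr do rewrite sumrB.
under [RHS]eq_bigr do rewrite sumrB.
rewrite !sumrB; congr (_ - _).
rewrite exchange_big_cond; apply: eq_bigr => x _.
by apply: eq_bigl => y; rewrite esym.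
Qed.

Lemma dirichlet_energy w :
  2 * \sum_x w x * laplace w x = \sum_x \sum_(y | e x y) (w x - w y) ^+ 2.
Proof.
have swap : \sum_x \sum_(y | e x y) w x * (w x - w y)
          = \sum_x \sum_(y | e x y) w y * (w y - w x).
  rewrite exchange_big_cond; apply: eq_bigr => x _.
  by apply: eq_bigl => y; rewrite esym.
under eq_bigr do rewrite mulr_sumr.
rewrite mulr2n mulrDl mul1r [X in X + _]swap -big_split /=.
apply: eq_bigr => x _; rewrite -big_split /=.
by apply: eq_bigr => y _; ring.
Qed.

Lemma harmonic_edge w x y :
  (forall z, laplace w z = 0) -> e x y -> w x = w y.
Proof.
move=> hw exy.
have energy0 : \sum_x \sum_(y | e x y) (w x - w y) ^+ 2 = 0.
  by rewrite -dirichlet_energy big1 ?mulr0 // => z _; rewrite hw mulr0.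
have row0 : \sum_(y | e x y) (w x - w y) ^+ 2 = 0.
  apply: (psumr_eq0P _ energy0) => // z _.
  by apply: sumr_ge0 => t _; exact: sqr_ge0.
have : (w x - w y) ^+ 2 = 0 by apply: (psumr_eq0P _ row0) => // *; exact: sqr_ge0.
by move/eqP; rewrite sqrf_eq0 subr_eq0 => /eqP.
Qed.

Lemma connected_harmonic_const : (forall x y, connect e x y) -> harmonic_const.
Proof.
move=> conn w hw x y; have /connectP [p pth ->] := conn x y.
elim: p x pth => [|z p IH] x //= /andP [exz pth].
by rewrite -(IH z pth) (harmonic_edge hw exz).
Qed.

Lemma lap_mul_const : lap R e *m (const_mx 1 : 'cV[R]_#|U|) = 0.
Proof.
have const_lap : (const_mx 1 : 'rV[R]_#|U|) *m lap R e = 0.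
  have -> : const_mx 1 = row_of_fun (fun _ => 1) by apply/rowP => j; rewrite !mxE.
  rewrite mul_row_of_fun_lap; apply/rowP => j; rewrite !mxE.
  by rewrite /laplace big1 // => y _; rewrite subrr.
by apply: trmx_inj; rewrite trmx_mul tr_lap trmx_const const_lap trmx0.
Qed.

Section Potential.
Hypothesis hc : harmonic_const.

Lemma rank_kermx_lap_le1 (x0 : U) : (\rank (kermx (lap R e)) <= 1)%N.
Proof.
apply: leq_trans (rank_leq_row (const_mx 1 : 'rV[R]_#|U|)).
apply: mxrankS; apply/row_subP => i; set r := row i _.
have hr : r *m lap R e = 0 by rewrite -row_mul mulmx_ker row0.
clearbody r; pose w x : R := r 0 (enum_rank x).
have hw x : laplace w x = 0.
  by rewrite -row_of_funE -mul_row_of_fun_lap row_of_fun_entries hr mxE.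
have -> : r = w x0 *: const_mx 1.
  by apply/rowP => j; rewrite !mxE mulr1 -[j]enum_valK; exact: (hc hw).
by rewrite scalemx_sub.
Qed.

(* L kills the constants and, by [hc], only them; hence its row space is the
   whole hyperplane of sum-zero vectors. *)
Lemma lap_eqmx_sum0 (x0 : U) : (lap R e == kermx (const_mx 1 : 'cV[R]_#|U|))%MS.
Proof.
have n0 : (0 < #|U|)%N by apply/card_gt0P; exists x0.
have rk_lap : (#|U| - 1 <= \rank (lap R e))%N.
  by move: (rank_kermx_lap_le1 x0); rewrite mxrank_ker; lia.
have rk_const : \rank (const_mx 1 : 'cV[R]_#|U|) = 1%N.
  apply/eqP; rewrite eqn_leq rank_leq_col lt0n mxrank_eq0.
  apply/eqP => /matrixP /(_ (Ordinal n0) 0); rewrite !mxE; apply/eqP.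
  exact: oner_neq0.
have sub : (lap R e <= kermx (const_mx 1 : 'cV[R]_#|U|))%MS.
  by apply/sub_kermxP; exact: lap_mul_const.
by rewrite -(geq_leqif (mxrank_leqif_eq sub)) mxrank_ker rk_const; lia.
Qed.

Definition potential (g : U -> R) (x : U) : R :=
  (row_of_fun g *m pinvmx (lap R e)) 0 (enum_rank x).

Lemma potential_laplace g x : \sum_y g y = 0 -> laplace (potential g) x = g x.
Proof.
move=> g0.
have g_sum0 : (row_of_fun g <= kermx (const_mx 1 : 'cV[R]_#|U|))%MS.
  apply/sub_kermxP; apply/matrixP => i j; rewrite !mxE -[RHS]g0.
  rewrite (reindex (@enum_rank U)) /=; last first.
    by exists enum_val => k _; rewrite ?enum_rankK ?enum_valK.
  by apply: eq_bigr => k _; rewrite !mxE enum_rankK mulr1.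
case/andP: (lap_eqmx_sum0 x) => _ sum0_lap.
rewrite -row_of_funE -mul_row_of_fun_lap row_of_fun_entries.
by rewrite mulmxKpV ?row_of_funE //; exact: submx_trans g_sum0 sum0_lap.
Qed.

Lemma resistE x y :
  resist R e x y = potential (fun z => (z == x)%:R - (z == y)%:R) x
                 - potential (fun z => (z == x)%:R - (z == y)%:R) y.
Proof. by []. Qed.

Lemma resist_potential x y v :
  (forall z, laplace v z = (z == x)%:R - (z == y)%:R) -> resist R e x y = v x - v y.
Proof.
move=> hv; rewrite resistE; set g := fun z => _.
have hg z : laplace (potential g) z = g z.
  by apply: potential_laplace; rewrite sumrB !sum_delta1 subrr.
have hdiff z : laplace (fun t => potential g t - v t) z = 0.
  by rewrite laplaceB hg hv subrr.
have := hc hdiff x y; lra.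
Qed.

Section Green.
Variables (G : U -> U -> R) (r : U).
Hypotheses (Gsym : forall s t, G s t = G t s)
  (G_laplace : forall s x, laplace (G s) x = (x == s)%:R - (x == r)%:R).

Lemma resist_green s t : resist R e s t = G s s + G t t - 2 * G s t.
Proof.
rewrite (@resist_potential s t (fun z => G s z - G t z)) ?(Gsym t s); first ring.
by move=> z; rewrite laplaceB !G_laplace; ring.
Qed.

Lemma add_deg_kirchhoff_green : add_deg_kirchhoff R e =
  #|U|%:R * \sum_s (deg e s)%:R * G s s + (\sum_s (deg e s)%:R) * \sum_s G s s
  - 2 * \sum_s \sum_t (deg e s)%:R * G s t.
Proof.
rewrite /add_deg_kirchhoff; under eq_bigr do under eq_bigr do rewrite resist_green.
have row_sum s : \sum_t ((deg e s)%:R + (deg e t)%:R) =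
    #|U|%:R * (deg e s)%:R + \sum_t (deg e t)%:R :> R.
  by rewrite big_split /= sum_const.
have cross : \sum_s \sum_t ((deg e s)%:R + (deg e t)%:R) * G s t =
    2 * \sum_s \sum_t (deg e s)%:R * G s t.
  rewrite mulr2n mulrDl mul1r [X in _ = _ + X]exchange_big -big_split /=.
  apply: eq_bigr => s _; rewrite -big_split /=.
  by apply: eq_bigr => t _; rewrite (Gsym t s); ring.
rewrite sum_pairs_dist //; last by move=> s t; rewrite addrC.
under eq_bigr do rewrite row_sum mulrDl -mulrA.
by rewrite cross big_split /= -!mulr_sumr.
Qed.

Lemma mul_deg_kirchhoff_green : mul_deg_kirchhoff R e =
  (\sum_s (deg e s)%:R) * \sum_s (deg e s)%:R * G s s
  - \sum_s \sum_t (deg e s)%:R * (deg e t)%:R * G s t.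
Proof.
rewrite /mul_deg_kirchhoff; under eq_bigr do under eq_bigr do rewrite resist_green.
rewrite sum_pairs_dist //; last by move=> s t; rewrite mulrC.
under eq_bigr do rewrite -mulr_sumr.
by rewrite mulr_sumr; congr (_ - _); apply: eq_bigr => s _; ring.
Qed.

End Green.

Definition green (r x y : U) : R :=
  potential (fun z => (z == x)%:R - (z == r)%:R) y
  - potential (fun z => (z == x)%:R - (z == r)%:R) r.

Lemma green_laplace r x z : laplace (green r x) z = (z == x)%:R - (z == r)%:R.
Proof. by rewrite laplace_subr potential_laplace // sumrB !sum_delta1 subrr. Qed.

Lemma green_root r x : green r x r = 0.
Proof. exact: subrr. Qed.

Lemma green_sym r x y : green r x y = green r y x.
Proof.
have := laplace_adj (green r x) (green r y).
under eq_bigr do rewrite green_laplace mulrBr.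
under [X in _ = X -> _]eq_bigr do rewrite green_laplace mulrBl.
by rewrite !sumrB sum_mul_delta sum_delta sum_mul_delta sum_delta !green_root !subr0.
Qed.

End Potential.
End Laplacian.

Section Subdivision.
Variables (R : realFieldType) (T : finType) (e : rel T).
Hypotheses (esym : symmetric e) (eirr : irreflexive e).

Local Notation S := (subdiv_v e).
Local Notation se := (@subdiv_rel T e).

Definition end1 (f : edge_t e) : T := (val f).1.
Definition end2 (f : edge_t e) : T := (val f).2.

Lemma edge_end f : e (end1 f) (end2 f).
Proof. by case/andP: (valP f). Qed.

Lemma end1_neq_end2 f : end1 f != end2 f.
Proof. by apply: contraTneq (edge_end f) => ->; rewrite eirr. Qed.

Lemma sum_edge_t (F : T * T -> R) :
  \sum_(f : edge_t e) F (val f) = \sum_(p | sedge e p) F p.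
Proof.
rewrite [RHS](reindex_omap (val : edge_t e -> T * T) insub); last first.
  by move=> p sp; rewrite insubT.
apply: eq_bigl => -[p sp] /=; rewrite insubT sp /=.
by symmetry; apply/eqP; congr Some; apply: val_inj.
Qed.

Lemma sum_edge_orient (h : T -> T -> R) :
  \sum_(f : edge_t e) (h (end1 f) (end2 f) + h (end2 f) (end1 f))
  = \sum_x \sum_(y | e x y) h x y.
Proof.
rewrite (sum_edge_t (fun p => h p.1 p.2 + h p.2 p.1)) big_split /=.
rewrite [RHS]pair_big_dep /= [RHS](bigID (fun p => (enum_rank p.1 < enum_rank p.2)%N)) /=.
congr (_ + _).
rewrite (reindex (fun p : T * T => (p.2, p.1))) /=; last first.
  by exists (fun p : T * T => (p.2, p.1)) => -[].
apply: eq_bigl => -[x y] /=; rewrite /sedge /= (esym y x).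
case exy : (e x y) => //=; rewrite ltnNge leq_eqVlt negb_or.
suff -> : enum_rank x != enum_rank y by [].
by apply: contraTneq exy => /enum_rank_inj ->; rewrite eirr.
Qed.

Lemma sum_edge_ends (w : T -> R) :
  \sum_(f : edge_t e) (w (end1 f) + w (end2 f)) = \sum_x (deg e x)%:R * w x.
Proof.
rewrite (sum_edge_orient (fun u _ => w u)); apply: eq_bigr => x _.
by rewrite natr_deg mulr_suml; under [RHS]eq_bigr do rewrite mul1r.
Qed.

Lemma sum_deg : \sum_x (deg e x)%:R = 2 * #|{: edge_t e}|%:R :> R.
Proof.
transitivity (\sum_x (deg e x)%:R * 1 : R); first by under [RHS]eq_bigr do rewrite mulr1.
by rewrite -(sum_edge_ends (fun=> 1)) sum_const; ring.
Qed.

Definition incident (x : T) (f : edge_t e) : bool := (x == end1 f) || (x == end2 f).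

Lemma sum_incident (g : T -> T -> R) x : (forall u v, g u v = g v u) ->
  \sum_(f | incident x f) g (end1 f) (end2 f) = \sum_(y | e x y) g x y.
Proof.
move=> gsym; rewrite big_mkcond /=.
transitivity (\sum_f ((end1 f == x)%:R * g (end1 f) (end2 f)
                   + (end2 f == x)%:R * g (end2 f) (end1 f))).
  apply: eq_bigr => f _; have ab := end1_neq_end2 f.
  rewrite /incident (gsym (end2 f)) -mulrDl (eq_sym (end1 f)) (eq_sym (end2 f)).
  case: (eqVneq x (end1 f)) ab => [<- /negbTE -> | _ _] /=; first by rewrite addr0 mul1r.
  by case: (x == end2 f); rewrite /= ?add0r ?mul1r ?mul0r.
rewrite (sum_edge_orient (fun u v => (u == x)%:R * g u v)).
rewrite -[RHS](sum_delta x (fun u => \sum_(y | e u y) g u y)).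
by apply: eq_bigr => u _; rewrite mulr_sumr.
Qed.

Lemma sum_subdiv_old (F : S -> R) x :
  \sum_(t | se (inl x) t) F t = \sum_(f | incident x f) F (inr f).
Proof. by rewrite big_sumType /= big_pred0_eq add0r. Qed.

Lemma sum_subdiv_new (F : S -> R) f :
  \sum_(t | se (inr f) t) F t = F (inl (end1 f)) + F (inl (end2 f)).
Proof.
rewrite big_sumType /= big_pred0_eq addr0 (bigD1 (end1 f)) /= ?eqxx //.
congr (_ + _); apply: big_pred1 => y /=.
by case: (eqVneq y (end1 f)) => [->|]; rewrite ?eqxx ?(negbTE (end1_neq_end2 f)) ?andbT.
Qed.

Lemma deg_subdiv_old x : (deg se (inl x))%:R = (deg e x)%:R :> R.
Proof. by rewrite !natr_deg sum_subdiv_old (sum_incident (g := fun _ _ => 1)). Qed.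

Lemma deg_subdiv_new f : (deg se (inr f))%:R = 2 :> R.
Proof. by rewrite natr_deg sum_subdiv_new. Qed.

Lemma sum_deg_subdiv : \sum_s (deg se s)%:R = 4 * #|{: edge_t e}|%:R :> R.
Proof.
rewrite big_sumType /=; under eq_bigr do rewrite deg_subdiv_old.
under [X in _ + X]eq_bigr do rewrite deg_subdiv_new.
by rewrite sum_deg sum_const; ring.
Qed.

Lemma subdiv_sym : symmetric se.
Proof. by case=> [x|f] [y|g]. Qed.

Lemma subdiv_irr : irreflexive se.
Proof. by case. Qed.

Lemma card_subdiv : #|{: S}| = (#|T| + #|{: edge_t e}|)%N.
Proof. exact: card_sum. Qed.

Lemma laplace_subdiv_new (w : S -> R) f :
  laplace se w (inr f) = 2 * w (inr f) - w (inl (end1 f)) - w (inl (end2 f)).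
Proof. by rewrite /laplace sum_subdiv_new; ring. Qed.

(* Twice the piecewise-linear extension of [w] to S(G); with the factor 2 the
   Laplacian of S(G) at old vertices agrees with that of G. *)
Definition interp (w : T -> R) (s : S) : R :=
  match s with inl x => 2 * w x | inr f => w (end1 f) + w (end2 f) end.

Lemma laplace_interp_old w x : laplace se (interp w) (inl x) = laplace e w x.
Proof.
rewrite /laplace sum_subdiv_old /=.
rewrite (sum_incident (g := fun u v => 2 * w x - (w u + w v))); last by move=> u v; ring.
by apply: eq_bigr => y _; ring.
Qed.

Lemma laplace_interp_new w f : laplace se (interp w) (inr f) = 0.
Proof. by rewrite laplace_subdiv_new /=; ring. Qed.

Lemma subdiv_harmonic_const : harmonic_const R e -> harmonic_const R se.
Proof.
move=> hc w hw; pose z y := w (inl y) / 2.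
have wE t : w t = interp z t.
  case: t => [y|f] /=; rewrite /z; first by field.
  by have := hw (inr f); rewrite laplace_subdiv_new; lra.
have hz x : laplace e z x = 0.
  by rewrite -laplace_interp_old -(hw (inl x)); apply: eq_bigr => t _; rewrite !wE.
have interp_const t x0 : interp z t = 2 * z x0.
  case: t => [y|f] /=; first by rewrite (hc _ hz y x0).
  by rewrite (hc _ hz (end1 f) x0) (hc _ hz (end2 f) x0); ring.
move=> s t; rewrite !wE; case: s => [x0|f]; first by rewrite !(interp_const _ x0).
by rewrite !(interp_const _ (end1 f)).
Qed.

Lemma sum_interp w : \sum_t interp w t = \sum_x (2 + (deg e x)%:R) * w x.
Proof.
rewrite big_sumType /= sum_edge_ends -big_split /=.
by apply: eq_bigr => x _; ring.
Qed.

Lemma sum_deg_interp w :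
  \sum_s (deg se s)%:R * interp w s = 4 * \sum_x (deg e x)%:R * w x.
Proof.
rewrite big_sumType /=; under eq_bigr do rewrite deg_subdiv_old.
under [X in _ + X]eq_bigr do rewrite deg_subdiv_new.
rewrite -mulr_sumr sum_edge_ends.
rewrite (eq_bigr (fun x => 2 * ((deg e x)%:R * w x))) -?mulr_sumr; first ring.
by move=> x _; ring.
Qed.

Lemma interp_comm (F : T -> T -> R) s t :
  interp (fun y => interp (F^~ y) s) t = interp (fun x => interp (F x) t) s.
Proof. by case: s t => [x|f] [y|g] /=; ring. Qed.

Lemma eq_interp w w' s : (forall x, w x = w' x) -> interp w s = interp w' s.
Proof. by move=> ww'; case: s => [x|f] /=; rewrite !ww'. Qed.

Lemma laplace_interp_comm (F : T -> T -> R) s x :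
  laplace e (fun y => interp (F^~ y) s) x = interp (fun z => laplace e (F z) x) s.
Proof. by case: s => [z|f] /=; rewrite ?laplaceZ ?laplaceD. Qed.

Section GreenSubdivision.
Variables (K : T -> T -> R) (r : T).
Hypotheses (Ksym : forall x y, K x y = K y x)
  (K_laplace : forall x z, laplace e (K x) z = (z == x)%:R - (z == r)%:R).

(* A unit current entering at
   an old vertex x produces [interp (K x)]; one entering at the midpoint of ab
   acts on the old vertices like half a unit at a and half a unit at b, and
   raises the midpoint itself by a further 1/2. *)
Definition green_subdiv (s t : S) : R :=
  2^-1 * interp (fun y => interp (K^~ y) s) t
  + (if s is inr _ then 2^-1 else 0) * (t == s)%:R.

Lemma green_subdiv_sym s t : green_subdiv s t = green_subdiv t s.
Proof.
rewrite /green_subdiv interp_comm (@eq_interp _ (fun x => interp (K^~ x) t)); last first.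
  by move=> x; apply: eq_interp => y; rewrite Ksym.
by congr (_ + _); case: s t => [x|f] [y|g]; rewrite /= ?mul0r ?mulr0 // eq_sym.
Qed.

Lemma green_subdiv_laplace s u :
  laplace se (green_subdiv s) u = (u == s)%:R - (u == inl r)%:R.
Proof.
rewrite laplaceD laplaceZ laplaceZ laplace_delta.
case: u => [x|g].
  rewrite laplace_interp_old laplace_interp_comm.
  case: s => [y|f] /=; rewrite !K_laplace /=; first lra.
  by case: (eqVneq x (end1 f)) (end1_neq_end2 f) => [<- /negbTE ->|_ _]; rewrite /=; lra.
rewrite laplace_interp_new deg_subdiv_new.
by case: s => [y|f] /=; lra.
Qed.

Lemma green_subdiv_diag_old x : green_subdiv (inl x) (inl x) = 2 * K x x.
Proof. by rewrite /green_subdiv /=; field. Qed.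

Lemma green_subdiv_diag_new f : green_subdiv (inr f) (inr f) =
  2^-1 * (K (end1 f) (end1 f) + K (end2 f) (end2 f) + 2 * K (end1 f) (end2 f)) + 2^-1.
Proof. by rewrite /green_subdiv /= eqxx mulr1 (Ksym (end2 f) (end1 f)); ring. Qed.

Lemma sum_edge_green :
  \sum_(f : edge_t e) (K (end1 f) (end1 f) + K (end2 f) (end2 f) + 2 * K (end1 f) (end2 f))
  = 2 * \sum_x (deg e x)%:R * K x x - (#|T|%:R - 1).
Proof.
transitivity (\sum_x \sum_(v | e x v) (K x x + K x v)).
  rewrite -(sum_edge_orient (fun u v => K u u + K u v)).
  by apply: eq_bigr => f _; rewrite (Ksym (end2 f)); ring.
have star u : \sum_(v | e u v) (K u u + K u v)
    = 2 * ((deg e u)%:R * K u u) - (1 - (u == r)%:R).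
  have := K_laplace u u; rewrite laplaceE eqxx /= => h.
  have const : \sum_(v | e u v) K u u = (deg e u)%:R * K u u.
    by rewrite natr_deg mulr_suml; under [RHS]eq_bigr do rewrite mul1r.
  rewrite big_split /= const; lra.
under eq_bigr do rewrite star.
by rewrite sumrB -mulr_sumr sumrB sum_const sum_delta1; ring.
Qed.

Lemma sum_green_subdiv_diag : \sum_s green_subdiv s s =
  2 * \sum_x K x x + \sum_x (deg e x)%:R * K x x
  - 2^-1 * (#|T|%:R - 1) + 2^-1 * #|{: edge_t e}|%:R.
Proof.
rewrite big_sumType /=; under eq_bigr do rewrite green_subdiv_diag_old.
under [X in _ + X]eq_bigr do rewrite green_subdiv_diag_new.
rewrite big_split /= -!mulr_sumr sum_edge_green sum_const; lra.
Qed.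

Lemma sum_deg_green_subdiv_diag : \sum_s (deg se s)%:R * green_subdiv s s =
  4 * \sum_x (deg e x)%:R * K x x - (#|T|%:R - 1) + #|{: edge_t e}|%:R.
Proof.
rewrite big_sumType /=; under eq_bigr do rewrite green_subdiv_diag_old deg_subdiv_old.
under [X in _ + X]eq_bigr do rewrite green_subdiv_diag_new deg_subdiv_new.
rewrite (eq_bigr (fun f => K (end1 f) (end1 f) + K (end2 f) (end2 f)
                           + 2 * K (end1 f) (end2 f) + 1)); last by move=> f _; field.
rewrite big_split /= sum_edge_green sum_const.
rewrite (eq_bigr (fun x => 2 * ((deg e x)%:R * K x x))); last by move=> x _; ring.
by rewrite -mulr_sumr; ring.
Qed.

Lemma sum_row_green_subdiv s : \sum_t green_subdiv s t =
  2^-1 * \sum_y (2 + (deg e y)%:R) * interp (K^~ y) s + (if s is inr _ then 2^-1 else 0).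
Proof.
rewrite big_split /= -!mulr_sumr sum_interp; congr (_ + _).
by rewrite (eq_bigr (fun t => (t == s)%:R)) ?sum_delta1 ?mulr1.
Qed.

Lemma sum_deg_green_subdiv : \sum_s \sum_t (deg se s)%:R * green_subdiv s t =
  4 * \sum_x \sum_y (deg e x)%:R * K x y
  + 2 * \sum_x \sum_y (deg e x)%:R * (deg e y)%:R * K x y + #|{: edge_t e}|%:R.
Proof.
under eq_bigr do rewrite -mulr_sumr sum_row_green_subdiv mulrDr.
rewrite big_split /=; congr (_ + _).
  rewrite (eq_bigr (fun s => \sum_y 2^-1 * (2 + (deg e y)%:R)
                          * ((deg se s)%:R * interp (K^~ y) s))); last first.
    by move=> s _; rewrite !mulr_sumr; apply: eq_bigr => y _; ring.
  rewrite exchange_big /=; under eq_bigr do rewrite -mulr_sumr sum_deg_interp.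
  rewrite [X in _ = 4 * X + _]exchange_big [X in _ = _ + 2 * X]exchange_big /=.
  rewrite !mulr_sumr -big_split; apply: eq_bigr => y _ /=.
  rewrite !mulr_sumr -big_split; apply: eq_bigr => x _ /=.
  lra.
rewrite big_sumType /= big1 ?add0r => [|x _]; last by rewrite mulr0.
rewrite (eq_bigr (fun=> 1)) => [|f _]; last by rewrite deg_subdiv_new mulfV // pnatr_eq0.
by rewrite sum_const mulr1.
Qed.
End GreenSubdivision.
End Subdivision.

Theorem theorem2p4 (R : realFieldType) (T : finType) (e : rel T) :
  symmetric e -> irreflexive e ->
  (forall x y : T, connect e x y) ->
  (1 < #|T|)%N ->
  let n : R := (#|T|)%:R in
  let m : R := (#|{: edge_t e}|)%:R in
  add_deg_kirchhoff R (@subdiv_rel T e) =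
    4 * add_deg_kirchhoff R e + 4 * mul_deg_kirchhoff R e
    + (m + n) * (m - n + 1) + 2 * m * (m - n).
Proof.
move=> esym eirr conn T_gt1 n m.
have [r _] : exists r : T, r \in T by apply/card_gt0P; exact: ltnW.
have hc := connected_harmonic_const (R := R) esym conn.
have Ksym := green_sym esym eirr hc r.
have K_laplace := green_laplace esym eirr hc r.
rewrite (add_deg_kirchhoff_green (subdiv_sym (e := e)) (subdiv_irr (e := e))
           (subdiv_harmonic_const esym eirr hc)
           (green_subdiv_sym Ksym) (green_subdiv_laplace esym eirr K_laplace)).
rewrite (add_deg_kirchhoff_green esym eirr hc Ksym K_laplace).
rewrite (mul_deg_kirchhoff_green esym eirr hc Ksym K_laplace).
rewrite card_subdiv natrD sum_deg_subdiv // (sum_deg_green_subdiv_diag esym eirr Ksym K_laplace).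
rewrite (sum_green_subdiv_diag esym eirr Ksym K_laplace) sum_deg_green_subdiv // sum_deg //.
rewrite /n /m; lra.
Qed.
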